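(* For every $N\ge 2$ and every $x\in\{0,\dots,N-2\}$, $$|2p(x)-1|\le 3\,\frac{N-x-1}{(N-x)!}\le\frac{3}{(N-x-1)!}.$$ In particular, if $N\ge 4$, then $\frac14\le p(x)\le\frac34$ for all $x\in\{0,\dots,N-4\}$.
   Context: For $\sigma\in\mathcal{S}_N$, $\eta_1(\sigma)$ is the number of fixed points and $\eta_2(\sigma)$ the number of 2-cycles of $\sigma$; $\nu$ is the uniform measure on $\mathcal{S}_N$, and for $x\in\{0,\dots,N\}\setminus\{N-1\}$, $p(x)=\mathbb{E}_\nu[\eta_2\mid\eta_1=x]$. *)

From mathcomp Require Import all_boot all_order all_algebra all_fingroup.
Set Implicit Arguments. Unset Strict Implicit. Unset Printing Implicit Defensive.
Import Order.TTheory GRing.Theory Num.Theory.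

Definition eta1 (N : nat) (s : 'S_N) : nat := #|[set i | s i == i]|.

Definition eta2 (N : nat) (s : 'S_N) : nat :=
  #|[set C in porbits s | #|C| == 2]|.

(* p N x = E_nu[eta2 | eta1 = x] under the uniform measure nu on S_N:
   the average of eta2 over the permutations with exactly x fixed points. *)
Definition p {R : realFieldType} (N x : nat) : R :=
  ((\sum_(s : 'S_N | eta1 s == x) (eta2 s)%:R) /
   (#|[set s : 'S_N | eta1 s == x]|)%:R)%R.

(* Put m = N - x, the number of points moved by a permutation with x fixed
   points, and let D m be the number of derangements of m points.  Grouping
   the permutations of S_N by their support S (the set of moved points):
   - exactly D |S| permutations have support S ([nsupp_derange]); the proof
     classifies them by the image b of a point a of S, which gives the
     recurrence D (m+2) = (m+1) (D (m+1) + D m) through composition with the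
     transposition (a b) ([count_swap], [count_noswap]);
   - twice the number of 2-cycles counts the ordered pairs of points swapped
     by the permutation, and each such pair of S is swapped by D (|S| - 2)
     permutations of support S ([sum_eta2_supp]).
   Hence p N x = m (m-1) D (m-2) / (2 D m).  The classical identity
   m (m-1) D (m-2) = D m + (-1)^m (m-1) ([derange_pairs]) gives the exact
   value |2 p - 1| = (m-1) / D m ([p_deviation]), and the bound
   m! <= 3 D m for m >= 2 ([derange_fact]) turns it into both estimates of
   the theorem. *)

From mathcomp Require Import all_boot all_order all_algebra all_fingroup.
From mathcomp Require Import zify ring lra.
Set Implicit Arguments. Unset Strict Implicit. Unset Printing Implicit Defensive.
Import Order.TTheory GRing.Theory Num.Theory.

(* [derange n] is defined by the derangement recurrence; [nsupp_derange]
   shows that it counts the permutations of n points without fixed point. *)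
Fixpoint derange (n : nat) : nat :=
  match n with
  | 0 => 1
  | 1 => 0
  | S (S k as k1) => k1 * (derange k1 + derange k)
  end.

Section DerangementArithmetic.
Local Open Scope ring_scope.

Lemma derange_sign (R : comNzRingType) (n : nat) :
  (derange n.+1)%:R = n.+1%:R * (derange n)%:R + (-1) ^+ n.+1 :> R.
Proof.
elim: n => [|n IH]; first by rewrite /= expr1 mul1r addrN.
rewrite [derange n.+2]/= natrM natrD IH !exprS !mulrSr.
move: ((-1) ^+ n) (derange n)%:R (n%:R) => e d m; ring.
Qed.

Lemma derange_pairs (R : comNzRingType) (n : nat) :
  (n.+2 * n.+1 * derange n)%:R = (derange n.+2)%:R + (-1) ^+ n.+2 * n.+1%:R :> R.
Proof.
rewrite !derange_sign !exprS !natrM !mulrSr.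
move: ((-1) ^+ n) (derange n)%:R (n%:R) => e d m; ring.
Qed.

Lemma derange_fact (n : nat) : (n.+2`! <= 3 * derange n.+2)%N.
Proof.
suff : (n.+2`! <= 3 * derange n.+2)%N /\ (n.+3`! <= 3 * derange n.+3)%N by case.
elim: n => [|n [IH1 IH2]] //; split => //.
rewrite [derange n.+4]/= -/(derange n.+3) -/(derange n.+2).
rewrite !factS in IH1 IH2 *; nia.
Qed.

(* In particular D m > 0 for m >= 2, so the conditioning event is nonempty. *)
Lemma derange_gt0 (n : nat) : (0 < derange n.+2)%N.
Proof. by have := derange_fact n; have := fact_gt0 n.+2; lia. Qed.

End DerangementArithmetic.

Lemma setU2_eq (T : finType) (A S : {set T}) (a b : T) :
  a \in S -> b \in S -> a \notin A -> b \notin A ->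
  (a |: (b |: A) == S) = (A == S :\ a :\ b).
Proof.
move=> aS bS aA bA; apply/eqP/eqP => [<-|->]; apply/setP => i; rewrite !inE.
  case: (eqVneq i a) => [->|ia]; last case: (eqVneq i b) => [->|ib];
  by rewrite ?(negPf aA) ?(negPf bA) ?andbF.
by case: (eqVneq i a) => [->|ia]; last case: (eqVneq i b) => [->|ib]; rewrite ?aS ?bS.
Qed.

Lemma setU1_eq (T : finType) (A S : {set T}) (a : T) :
  a \in S -> a \notin A -> (a |: A == S) = (A == S :\ a).
Proof.
move=> aS aA; apply/eqP/eqP => [<-|->]; apply/setP => i; rewrite !inE.
  by case: (eqVneq i a) => [->|ia]; rewrite ?(negPf aA).
by case: (eqVneq i a) => [->|ia]; rewrite ?aS.
Qed.

Lemma tpermL_img (T : finType) (s : {perm T}) (a b : T) :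
  (tperm a b (s a) == b) = (s a == a).
Proof. by rewrite -{2}(tpermL a b) (inj_eq perm_inj). Qed.

Lemma tpermR_img (T : finType) (s : {perm T}) (a b : T) :
  (tperm a b (s b) == a) = (s b == b).
Proof. by rewrite -{2}(tpermR a b) (inj_eq perm_inj). Qed.

Lemma card_setD1 (T : finType) (A : {set T}) (x : T) : x \in A -> #|A :\ x| = #|A|.-1.
Proof. by move=> xA; rewrite (cardsD1 x A) xA. Qed.

Section Supports.
Variable N : nat.
Implicit Types (s : 'S_N) (S : {set 'I_N}).

Definition supp s : {set 'I_N} := [set i | s i != i].

Lemma eta1_supp s : (eta1 s + #|supp s|)%N = N.
Proof.
rewrite /eta1 (_ : supp s = ~: [set i | s i == i]); first by rewrite cardsC card_ord.
by apply/setP => i; rewrite !inE.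
Qed.

Lemma supp_img s a : a \in supp s -> s a \in supp s :\ a.
Proof. by rewrite !inE => h; rewrite h (inj_eq perm_inj). Qed.

Lemma supp_eq0 s : (supp s == set0) = (s == 1%g).
Proof.
apply/eqP/eqP => [h|->]; last by apply/setP => i; rewrite !inE perm1 eqxx.
apply/permP => i; rewrite perm1; apply/eqP.
by have := in_set0 i; rewrite -h inE => /negbFE.
Qed.

Lemma supp_notin s S x : s x != x -> x \notin S -> (supp s == S) = false.
Proof. by move=> sx xS; apply/negP => /eqP e; move: xS; rewrite -e inE sx. Qed.

Lemma supp_mul_tperm_fixed s a b : a != b -> s a = a -> s b = b ->
  supp (s * tperm a b) = a |: (b |: supp s).
Proof.
move=> ab sa sb; apply/setP => i; rewrite !inE permM.
case: (eqVneq i a) => [->|ia]; first by rewrite sa tpermL eq_sym ab.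
case: (eqVneq i b) => [->|ib]; first by rewrite sb tpermR ab.
rewrite tpermD //.
- by rewrite -{1}sa (inj_eq perm_inj) eq_sym.
- by rewrite -{1}sb (inj_eq perm_inj) eq_sym.
Qed.

Lemma supp_mul_tperm_moved s a b : a != b -> s a = a -> s b != b ->
  supp (s * tperm a b) = a |: supp s.
Proof.
move=> ab sa sb; apply/setP => i; rewrite !inE permM.
case: (eqVneq i a) => [->|ia]; first by rewrite sa tpermL eq_sym ab.
case: (eqVneq (s i) b) => [e|ib].
  rewrite e tpermR eq_sym ia; apply/esym/negP => /eqP ebi.
  by move: sb; rewrite {1}ebi e eqxx.
by rewrite tpermD 1?(eq_sym b) // -{1}sa (inj_eq perm_inj) eq_sym.
Qed.

Definition nsupp S : nat := \sum_(s : 'S_N | supp s == S) 1.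

(* Permutations of support [S] exchanging [a] and [b] are those of support
   [S :\ a :\ b] followed by [tperm a b]. *)
Lemma count_swap S a b : a != b -> a \in S -> b \in S ->
  \sum_(s : 'S_N | [&& supp s == S, s a == b & s b == a]) 1 = nsupp (S :\ a :\ b).
Proof.
move=> ab aS bS; rewrite (reindex_inj (mulIg (tperm a b))) /nsupp.
apply: eq_bigl => s /=; rewrite !permM tpermL_img tpermR_img.
case: (eqVneq (s a) a) => sa; case: (eqVneq (s b) b) => sb /=.
- by rewrite andbT supp_mul_tperm_fixed // setU2_eq // !inE ?sa ?sb eqxx.
- by rewrite andbF (@supp_notin _ _ b) // !inE eqxx ?andbF.
- by rewrite andbF (@supp_notin _ _ a) // !inE eqxx ?andbF.
- by rewrite andbF (@supp_notin _ _ a) // !inE eqxx ?andbF.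
Qed.

(* Permutations of support [S] sending [a] to [b] but not [b] to [a] are those
   of support [S :\ a] followed by [tperm a b]. *)
Lemma count_noswap S a b : a != b -> a \in S -> b \in S ->
  \sum_(s : 'S_N | [&& supp s == S, s a == b & s b != a]) 1 = nsupp (S :\ a).
Proof.
move=> ab aS bS; rewrite (reindex_inj (mulIg (tperm a b))) /nsupp.
apply: eq_bigl => s /=; rewrite !permM tpermL_img tpermR_img.
case: (eqVneq (s a) a) => sa; case: (eqVneq (s b) b) => sb /=.
- rewrite andbF; apply/esym/negP => /eqP e.
  have : b \in S :\ a by rewrite !inE eq_sym ab bS.
  by rewrite -e inE sb eqxx.
- by rewrite andbT supp_mul_tperm_moved // setU1_eq // !inE ?sa eqxx.
- by rewrite andbF (@supp_notin _ _ a) // !inE eqxx ?andbF.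
- by rewrite andbF (@supp_notin _ _ a) // !inE eqxx ?andbF.
Qed.

(* Classifying by the image [b] of a point [a] of [S] gives the derangement
   recurrence. *)
Lemma nsupp_rec S a : a \in S ->
  nsupp S = \sum_(b in S :\ a) (nsupp (S :\ a) + nsupp (S :\ a :\ b)).
Proof.
move=> aS; rewrite {1}/nsupp (partition_big (fun s => s a) (mem (S :\ a))).
  apply: eq_bigr => b; rewrite !inE => /andP[ba bS].
  have ab : a != b by rewrite eq_sym.
  rewrite (bigID (fun s => s b == a)) /= addnC.
  rewrite -(count_swap ab aS bS) -(count_noswap ab aS bS).
  by congr (_ + _); apply: eq_bigl => s; rewrite andbA.
by move=> s /eqP e; rewrite -e; apply: supp_img; rewrite e.
Qed.

Lemma nsupp_derange S : nsupp S = derange #|S|.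
Proof.
move: {2}#|S| (leqnn #|S|) => k; elim: k S => [|k IH] S.
  rewrite leqn0 cards_eq0 => /eqP ->.
  by rewrite cards0 /nsupp (eq_bigl _ _ supp_eq0) big_pred1_eq.
case: (leqP #|S| k) => [/IH//|ltkS leSk].
have /set0Pn[a aS] : S != set0 by rewrite -card_gt0; lia.
have cSa : #|S :\ a| = k by rewrite card_setD1 //; lia.
rewrite (nsupp_rec aS) (eq_bigr (fun=> derange k + derange k.-1)%N).
  by rewrite sum_nat_const cSa (_ : #|S| = k.+1); [case: k {IH ltkS leSk cSa} | lia].
move=> b bSa; have cSab : #|S :\ a :\ b| = k.-1 by rewrite card_setD1 ?cSa.
by rewrite !IH ?cSab ?cSa ?leq_pred.
Qed.

End Supports.

Section TwoCycles.
Variable N : nat.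
Implicit Types (s : 'S_N) (S : {set 'I_N}).

Lemma porbit_card2 s a : (#|porbit s a| == 2) = (s a != a) && (s (s a) == a).
Proof.
apply/eqP/andP => [h|[h1 /eqP h2]].
  have U := uniq_traject_porbit s a; rewrite h /= in U.
  have I := iter_porbit s a; rewrite h /= in I.
  split; last by rewrite I.
  by move: U; rewrite inE andbT eq_sym.
have -> : porbit s a = [set a; s a].
  apply/setP => y; apply/porbitP/idP.
    case=> i ->; rewrite permX; elim: i => [|i IHi] /=; first by rewrite !inE eqxx.
    by move: IHi; rewrite !inE => /orP[] /eqP ->; rewrite ?h2 eqxx ?orbT.
  rewrite !inE => /orP[/eqP->|/eqP->]; first by exists 0; rewrite expg0 perm1.
  by exists 1; rewrite expg1.
by rewrite cards2 eq_sym h1.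
Qed.

Lemma eta2_double s : (2 * eta2 s)%N = #|[set a | #|porbit s a| == 2]|.
Proof.
rewrite -sum1_card (partition_big (porbit s) (mem [set C in porbits s | #|C| == 2])) /=;
  last by move=> y; rewrite !inE => ->; rewrite andbT imset_f.
rewrite (eq_bigr (fun=> 2%N)) => [|C]; first by rewrite sum_nat_const mulnC.
rewrite inE => /andP[/imsetP[c _ ->] /eqP c2].
rewrite -[RHS]c2 -sum1_card; apply: eq_bigl => y.
rewrite inE eq_porbit_mem; case yc: (y \in porbit s c); rewrite /= ?andbF //.
by move: yc; rewrite -eq_porbit_mem => /eqP ->; rewrite c2.
Qed.

Lemma eta2_pairs s : (2 * eta2 s)%N =
  \sum_(a in supp s) \sum_(b in supp s :\ a) ((s a == b) && (s b == a) : nat).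
Proof.
rewrite eta2_double -sum1_card big_mkcond [RHS]big_mkcond /=.
apply: eq_bigr => a _; rewrite !inE porbit_card2.
case: (boolP (s a != a)) => [sa|_] /=; last by [].
rewrite (bigD1 (s a)) ?supp_img ?inE //= eqxx big1 ?addn0 // => b /andP[_ bsa].
by rewrite eq_sym (negPf bsa).
Qed.

(* Summed over the permutations of support [S], each ordered pair of distinct
   points of [S] is exchanged by [derange (#|S| - 2)] of them. *)
Lemma sum_eta2_supp S : \sum_(s : 'S_N | supp s == S) 2 * eta2 s =
  (#|S| * (#|S| - 1) * derange (#|S| - 2))%N.
Proof.
under eq_bigr => s /eqP sS do rewrite eta2_pairs sS.
rewrite exchange_big /= -mulnA -sum_nat_const; apply: eq_bigr => a aS.
have cSa : #|S :\ a| = (#|S| - 1)%N by rewrite card_setD1 ?subn1.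
rewrite exchange_big /= -cSa -sum_nat_const; apply: eq_bigr => b bSa.
have cSab : #|S :\ a :\ b| = (#|S| - 2)%N by rewrite card_setD1 // cSa subn1 subn2.
have [ab bS] : a != b /\ b \in S by move: bSa; rewrite !inE eq_sym => /andP.
rewrite -cSab -nsupp_derange -(count_swap ab aS bS) big_mkcond [RHS]big_mkcond /=.
by apply: eq_bigr => s _; case: (supp s == S).
Qed.

Lemma sum_by_supp m (F : 'S_N -> nat) :
  \sum_(s : 'S_N | #|supp s| == m) F s =
  \sum_(S in [set S : {set 'I_N} | #|S| == m]) \sum_(s : 'S_N | supp s == S) F s.
Proof.
rewrite (partition_big (@supp N) (fun S => S \in [set S : {set 'I_N} | #|S| == m])) => [|s];
  last by rewrite inE.
apply: eq_bigr => S; rewrite inE => /eqP <-; apply: eq_bigl => s.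
by case: (eqVneq (supp s) S) => [->|]; rewrite ?eqxx ?andbF.
Qed.

Lemma eta1_eq s x : (x <= N)%N -> (eta1 s == x) = (#|supp s| == N - x)%N.
Proof. by have := eta1_supp s => h xN; apply/eqP/eqP; lia. Qed.

Lemma card_eta1 x : (x <= N)%N ->
  #|[set s : 'S_N | eta1 s == x]| = ('C(N, N - x) * derange (N - x))%N.
Proof.
move=> xN; rewrite -sum1_card (eq_bigl (fun s => #|supp s| == N - x)%N) => [|s]; last first.
  by rewrite inE eta1_eq.
rewrite sum_by_supp (eq_bigr (fun=> derange (N - x))) => [|S]; last first.
  by rewrite inE => /eqP <-; apply: nsupp_derange.
by rewrite sum_nat_const card_draws card_ord mulnC.
Qed.

Lemma sum_eta2_eta1 x : (x <= N)%N ->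
  (2 * \sum_(s : 'S_N | eta1 s == x) eta2 s)%N =
  ('C(N, N - x) * ((N - x) * (N - x - 1) * derange (N - x - 2)))%N.
Proof.
move=> xN; rewrite big_distrr /= (eq_bigl _ _ (fun s => eta1_eq s xN)) sum_by_supp.
rewrite (eq_bigr (fun=> (N - x) * (N - x - 1) * derange (N - x - 2)))%N.
  by rewrite sum_nat_const card_draws card_ord mulnC.
by move=> S; rewrite inE => /eqP <-; rewrite sum_eta2_supp.
Qed.

End TwoCycles.

Local Open Scope ring_scope.

Lemma ler_natdiv (R : numFieldType) (a b c d : nat) : (0 < b)%N -> (0 < d)%N ->
  (a * d <= c * b)%N -> a%:R / b%:R <= c%:R / d%:R :> R.
Proof.
move=> b0 d0 h; rewrite ler_pdivrMr ?ltr0n // mulrAC ler_pdivlMr ?ltr0n //.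
by rewrite -!natrM ler_nat.
Qed.

Lemma p_deviation (R : realFieldType) (N x : nat) : (2 <= N)%N -> (x <= N - 2)%N ->
  `|2 * (p N x : R) - 1| = (N - x - 1)%:R / (derange (N - x))%:R.
Proof.
move=> N2 xN2; have xN : (x <= N)%N by lia.
have [n mE] : exists n, (N - x = n.+2)%N by exists (N - x - 2)%N; lia.
have := card_eta1 xN; have := sum_eta2_eta1 xN.
rewrite /p -natr_sum mE subn1 subn2 /=.
set B := (\sum_(s | _) _)%N; set A := #|_|; set c := 'C(N, n.+2) => hB hA.
have c0 : (c%:R : R) != 0 by rewrite pnatr_eq0 -lt0n bin_gt0 -mE leq_subr.
have d0 : ((derange n.+2)%:R : R) != 0 by rewrite pnatr_eq0 -lt0n derange_gt0.
have eA : (A%:R : R) = c%:R * (derange n.+2)%:R by rewrite hA natrM.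
have eB : 2 * (B%:R : R) = c%:R * ((derange n.+2)%:R + (-1) ^+ n.+2 * n.+1%:R).
  by rewrite -derange_pairs -natrM hB natrM.
have -> : 2 * (B%:R / A%:R) - 1 = (-1) ^+ n.+2 * (n.+1%:R / (derange n.+2)%:R) :> R.
  rewrite mulrA eB eA.
  by move: ((-1) ^+ n.+2) => e; field; rewrite d0 c0.
by rewrite normrM normr_sign mul1r ger0_norm // divr_ge0.
Qed.

Theorem lemmaB1 (R : realFieldType) :
  (forall N x : nat, (2 <= N)%N -> (x <= N - 2)%N ->
     `|2 * (p N x : R) - 1| <= 3 * (N - x - 1)%:R / ((N - x)`!)%:R /\
     3 * (N - x - 1)%:R / ((N - x)`!)%:R <= 3 / ((N - x - 1)`!)%:R :> R) /\
  (forall N x : nat, (4 <= N)%N -> (x <= N - 4)%N ->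
     1 / 4 <= (p N x : R) <= 3 / 4).
Proof.
split=> N x N2 xN.
  have [n mE] : exists n, (N - x = n.+2)%N by exists (N - x - 2)%N; lia.
  rewrite p_deviation // mE subSS subn0 -!natrM.
  split; apply: ler_natdiv; rewrite ?fact_gt0 ?derange_gt0 //.
    by have := derange_fact n; nia.
  by rewrite [n.+2`!]factS; nia.
have [k mE] : exists k, (N - x = k.+4)%N by exists (N - x - 4)%N; lia.
have : `|2 * (p N x : R) - 1| <= 1%:R / 2%:R.
  rewrite p_deviation 1?mE ?subSS ?subn0; try lia.
  apply: ler_natdiv; rewrite ?derange_gt0 //.
  by have := derange_fact k.+2; rewrite 3!factS; have := fact_gt0 k.+1; nia.
by rewrite ler_norml => /andP[lo hi]; apply/andP; split; lra.
Qed.
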